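(* Let $k$ be a positive integer and let $n \geq (k-1)^3+1$. Then $\textup{Sav}_n(12\cdots k)=0$; that is, for every permutation $p$ of $\{1,\dots,n\}$, at least one of $p$ and $p^2$ contains the pattern $12\cdots k$.
   Context: A permutation $p$ of length $n$ is written in one-line notation $p=p_1p_2\cdots p_n$, with $p_i=p(i)$. A permutation $p$ contains a pattern $q=q_1\cdots q_k$ (itself a permutation of $\{1,\dots,k\}$) if there are indices $i_1<\cdots<i_k$ such that $p_{i_r}<p_{i_s}$ if and only if $q_r<q_s$; otherwise $p$ avoids $q$. The square $p^2$ is the composition $p^2(i)=p(p(i))$. A permutation $p$ is strongly $q$-avoiding if both $p$ and $p^2$ avoid $q$, and $\textup{Sav}_n(q)$ denotes the number of strongly $q$-avoiding permutations of length $n$. $12\cdots k$ denotes the increasing pattern of length $k$. *)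

From mathcomp Require Import all_boot all_fingroup.
Set Implicit Arguments. Unset Strict Implicit. Unset Printing Implicit Defensive.

(* Permutations of {1..n} are modelled as {perm 'I_n} (values 0..n-1).
   One-line notation p_1...p_n corresponds to p 0, ..., p (n-1). *)

Definition contains (n k : nat) (p : {perm 'I_n}) (q : {perm 'I_k}) : bool :=
  [exists f : {ffun 'I_k -> 'I_n},
    [forall r : 'I_k, forall s : 'I_k,
       ((r < s) ==> (f r < f s)) && ((p (f r) < p (f s)) == (q r < q s))]].

Definition avoids (n k : nat) (p : {perm 'I_n}) (q : {perm 'I_k}) : bool :=
  ~~ contains p q.

Definition psq (n : nat) (p : {perm 'I_n}) : {perm 'I_n} := (p * p)%g.

Lemma psqE (n : nat) (p : {perm 'I_n}) (i : 'I_n) : psq p i = p (p i).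
Proof. by rewrite /psq permM. Qed.

Definition incr_pat (k : nat) : {perm 'I_k} := 1%g.

Definition Sav (n k : nat) (q : {perm 'I_k}) : nat :=
  #|[set p : {perm 'I_n} | avoids p q && avoids (psq p) q]|.

From mathcomp Require Import all_boot all_fingroup.
From mathcomp Require Import zify.
Set Implicit Arguments. Unset Strict Implicit. Unset Printing Implicit Defensive.

(* Proof idea (an Erdős–Szekeres style labelling argument).
   For a map s : 'I_n -> 'I_n let lis s i be the length of the longest
   increasing subsequence of s ending at position i.  Two facts drive the
   proof:
   - if lis s i >= k then s contains 12...k (an increasing chain of that
     length ends at i);
   - if i < j and lis s i = lis s j then s j < s i.
   Suppose p and p^2 both avoid 12...k.  Label each position i by the triple
   (lis p i, lis p^2 i, lis p (p i)), all in [1, k-1].  If i < j carried the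
   same triple then p j < p i, p (p j) < p (p i), and (from the third label,
   at the positions p j < p i) p (p i) < p (p j): a contradiction.  So the
   labelling is injective and n <= (k-1)^3, contradicting the hypothesis. *)

Section LongestIncreasing.
Variable n : nat.
Variable s : 'I_n -> 'I_n.

(* lis_upto f i: the recursion "1 + max of lis over the earlier, smaller
   positions", cut off after f unfoldings; f = n suffices since every chain
   has at most n elements. *)
Fixpoint lis_upto (f : nat) (i : 'I_n) : nat :=
  if f is f'.+1 then
    (\max_(j : 'I_n | (j < i) && (s j < s i)) lis_upto f' j).+1
  else 0.

Lemma lis_upto_stable f g (i : 'I_n) : i < f -> i < g -> lis_upto f i = lis_upto g i.
Proof.
elim: f g i => [|f IH] [|g] i //= hf hg.
congr _.+1; apply: eq_bigr => j /andP[hj _].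
by apply: IH; apply: leq_trans hj _.
Qed.

Definition lis (i : 'I_n) : nat := lis_upto n i.

Lemma lisE i : lis i = (\max_(j : 'I_n | (j < i) && (s j < s i)) lis j).+1.
Proof.
have def_n : n = n.-1.+1 by case: n i => [[]|].
rewrite /lis -[in LHS](_ : lis_upto n.-1.+1 i = lis_upto n i); last by rewrite -def_n.
rewrite /=; congr _.+1; apply: eq_bigr => j /andP[hj _].
by apply: lis_upto_stable => //; apply: leq_trans hj _; rewrite -ltnS -def_n.
Qed.

Lemma lis_gt0 i : 0 < lis i.
Proof. by rewrite lisE. Qed.

Lemma lis_lt (i j : 'I_n) : i < j -> s i < s j -> lis i < lis j.
Proof.
move=> hij hs; rewrite (lisE j) ltnS.
by apply: (leq_bigmax_cond (P := fun l : 'I_n => (l < j) && (s l < s j))); rewrite hij.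
Qed.

Definition incr_pair : rel 'I_n := fun a b => (a < b) && (s a < s b).

Lemma incr_pair_trans : transitive incr_pair.
Proof.
move=> b a c /andP[h1 h2] /andP[h3 h4].
by rewrite /incr_pair (ltn_trans h1 h3) (ltn_trans h2 h4).
Qed.

Lemma lis_chain m (i : 'I_n) : m < lis i ->
  exists x c, [&& path incr_pair x c, last x c == i & size c == m].
Proof.
elim: m i => [|m IH] i h; first by exists i, [::]; rewrite /= eqxx.
have [j /and3P[hji hsj hmj]] : exists j : 'I_n, [&& j < i, s j < s i & m < lis j].
  apply/existsP; apply: contraLR h; rewrite negb_exists => /forallP H.
  rewrite -leqNgt lisE ltnS; apply/bigmax_leqP => j /andP[h1 h2].
  by move: (H j); rewrite h1 h2 /= -leqNgt.
have [x [c /and3P[hp hl hs]]] := IH j hmj.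
exists x, (rcons c i).
by rewrite rcons_path last_rcons size_rcons hp (eqP hl) (eqP hs) /incr_pair hji hsj !eqxx.
Qed.

End LongestIncreasing.

Lemma contains_incr_of_lis n k (p : {perm 'I_n}) (i : 'I_n) :
  0 < k -> k <= lis p i -> contains p (incr_pat k).
Proof.
move=> hk hL.
have hk1 : k.-1 < lis p i by rewrite prednK.
have [x [c /and3P[hp _ hs]]] := lis_chain hk1.
have hsz : size (x :: c) = k by rewrite /= (eqP hs) prednK.
have sorted_nth := sorted_ltn_nth (@incr_pair_trans n p) x (s := x :: c) hp.
apply/existsP; exists [ffun r : 'I_k => nth x (x :: c) r].
apply/forallP => r; apply/forallP => t; rewrite !ffunE /incr_pat !perm1.
have inr : (r : nat) \in [pred l | l < size (x :: c)] by rewrite inE hsz.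
have int : (t : nat) \in [pred l | l < size (x :: c)] by rewrite inE hsz.
case: (ltngtP r t) => hrt.
- by have /andP[-> ->] := sorted_nth _ _ inr int hrt.
- have /andP[_ h] := sorted_nth _ _ int inr hrt.
  by rewrite /= ltnNge (ltnW h).
- by rewrite /= hrt ltnn.
Qed.

Lemma lis_lt_of_avoids n k (p : {perm 'I_n}) (i : 'I_n) :
  0 < k -> avoids p (incr_pat k) -> lis p i < k.
Proof.
move=> hk; rewrite ltnNge; apply: contra => hL.
exact: contains_incr_of_lis hL.
Qed.

Lemma lis_eq_descent n (p : {perm 'I_n}) (i j : 'I_n) :
  lis p i = lis p j -> i < j -> p j < p i.
Proof.
move=> e hij; case: (ltngtP (p i) (p j)) => // h.
- by have := lis_lt hij h; rewrite e ltnn.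
- by move: hij; rewrite (perm_inj (val_inj h)) ltnn.
Qed.

Lemma lis_triple_inj n (p : {perm 'I_n}) (i j : 'I_n) :
  lis p i = lis p j -> lis (psq p) i = lis (psq p) j ->
  lis p (p i) = lis p (p j) -> i = j.
Proof.
have no_lt (a b : 'I_n) : lis p a = lis p b -> lis (psq p) a = lis (psq p) b ->
    lis p (p a) = lis p (p b) -> ~ a < b.
  move=> e1 e2 e3 hab.
  have desc1 := lis_eq_descent e1 hab.
  have := lis_eq_descent e2 hab; rewrite !psqE => desc2.
  have desc3 := lis_eq_descent (esym e3) desc1.
  by have := ltn_trans desc2 desc3; rewrite ltnn.
move=> e1 e2 e3; case: (ltngtP i j) => [hij|hji|/val_inj //].
- by case: (no_lt _ _ e1 e2 e3 hij).
- by case: (no_lt _ _ (esym e1) (esym e2) (esym e3) hji).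
Qed.

Lemma card_le_triple_labels n m (a b c : 'I_n -> nat) :
  (forall i, 0 < a i <= m) -> (forall i, 0 < b i <= m) -> (forall i, 0 < c i <= m) ->
  (forall i j, a i = a j -> b i = b j -> c i = c j -> i = j) ->
  n <= m ^ 3.
Proof.
move=> ha hb hc labels_inj.
have shift (x : 'I_n -> nat) : (forall i, 0 < x i <= m) -> forall i, (x i).-1 < m.
  by move=> hx i; move: (hx i); lia.
have unshift (x : 'I_n -> nat) : (forall i, 0 < x i <= m) ->
    forall i j, (x i).-1 = (x j).-1 -> x i = x j.
  by move=> hx i j; move: (hx i) (hx j); lia.
pose F i := (Ordinal (shift a ha i), Ordinal (shift b hb i), Ordinal (shift c hc i)).
have F_inj : injective F.
  move=> i j [e1 e2 e3].
  by apply: labels_inj; [exact: unshift ha _ _ e1|exact: unshift hb _ _ e2|exact: unshift hc _ _ e3].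
have cube : m ^ 3 = m * m * m by rewrite !expnS expn0 muln1 mulnA.
by have := leq_card F F_inj; rewrite !card_prod !card_ord cube.
Qed.

Lemma contains_incr_or_square k n (p : {perm 'I_n}) :
  0 < k -> (k - 1) ^ 3 + 1 <= n ->
  contains p (incr_pat k) || contains (psq p) (incr_pat k).
Proof.
move=> hk hn; apply/negPn/negP; rewrite negb_or => /andP[av1 av2].
have range (q : {perm 'I_n}) : avoids q (incr_pat k) -> forall i, 0 < lis q i <= k - 1.
  by move=> av i; rewrite lis_gt0 leq_subRL // add1n lis_lt_of_avoids.
have := card_le_triple_labels (range _ av1) (range _ av2)
  (fun i => range _ av1 (p i)) (@lis_triple_inj n p).
by rewrite leqNgt -addn1 hn.
Qed.

Theorem theorem2p1 (k n : nat) (hk : 0 < k) (hn : (k - 1) ^ 3 + 1 <= n) :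
  Sav n (incr_pat k) = 0 /\
  (forall p : {perm 'I_n}, contains p (incr_pat k) || contains (psq p) (incr_pat k)).
Proof.
have no_avoider p := contains_incr_or_square p hk hn.
split=> //; apply/eqP; rewrite cards_eq0; apply/eqP/setP => p.
by rewrite !inE /avoids -negb_or no_avoider.
Qed.
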